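(* Let $s\in\mathbb N$ and $\delta>0$, and suppose $0<\varepsilon\le\min\{1/(2s),\delta/2\}$. For every $\beta>0$ and $\ell\in\mathbb N$ there is some $\gamma=\gamma(s,\delta,\beta,\ell)>0$ such that the following holds for all sufficiently large $m$. Let $V_1,\dots,V_s$ be pairwise disjoint sets of vertices of a graph $G$, each of size $m$, such that for every $i\in[s-1]$ the pair $(V_i,V_s)$ is $\varepsilon$-regular of density at least $\delta$. Then there is a subset $U_s\subseteq V_s$ of size at least $m^{1-\beta}$ such that every set of $\ell$ vertices from $U_s$ has at least $\gamma m$ common neighbours in each of the sets $V_i$, $i\in[s-1]$.
   Context: For disjoint vertex sets $S,T$ in a graph, $d(S,T)=e(S,T)/(|S||T|)$, where $e(S,T)$ is the number of edges with one endpoint in $S$ and the other in $T$; the density of the pair $(A,B)$ is $d(A,B)$. Given $\varepsilon>0$, a pair $(A,B)$ of disjoint vertex sets is $\varepsilon$-regular if for all $X\subseteq A$, $Y\subseteq B$ with $|X|>\varepsilon|A|$ and $|Y|>\varepsilon|B|$ we have $|d(X,Y)-d(A,B)|<\varepsilon$. *)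

From HB Require Import structures.
From mathcomp Require Import all_boot all_order all_algebra.
From mathcomp Require Import reals exp.
Set Implicit Arguments. Unset Strict Implicit. Unset Printing Implicit Defensive.
Import Order.TTheory GRing.Theory Num.Theory.
Local Open Scope ring_scope.

Definition simple_graph (T : finType) (adj : rel T) : Prop :=
  symmetric adj /\ irreflexive adj.

(* e(S,T): number of edges with one endpoint in S and the other in T
   (for disjoint S, T these are exactly the adjacent pairs in S x T). *)
Definition edges_between (T : finType) (adj : rel T) (A B : {set T}) : nat :=
  #|[set p in setX A B | adj p.1 p.2]|.

Definition density (R : realType) (T : finType) (adj : rel T) (A B : {set T}) : R :=
  (edges_between adj A B)%:R / (#|A| * #|B|)%:R.

Definition eps_regular (R : realType) (T : finType) (adj : rel T) (eps : R)
    (A B : {set T}) : Prop :=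
  [disjoint A & B] /\
  forall X Y : {set T}, X \subset A -> Y \subset B ->
    eps * #|A|%:R < #|X|%:R -> eps * #|B|%:R < #|Y|%:R ->
    `|density R adj X Y - density R adj A B| < eps.

Definition common_nbrs (T : finType) (adj : rel T) (S W : {set T}) : {set T} :=
  [set v in W | [forall u in S, adj u v]].

From HB Require Import structures.
From mathcomp Require Import all_boot all_order all_algebra.
From mathcomp Require Import reals exp.
From mathcomp Require Import lra.

Set Implicit Arguments.
Unset Strict Implicit.
Unset Printing Implicit Defensive.

Import Order.TTheory GRing.Theory Num.Theory.
Local Open Scope ring_scope.

(* Dependent random choice.  By regularity, all but an (s-1) eps-fraction of
   the vertices of V_s have at least c m neighbours in every V_i, so the set W
   of these vertices has at least m/2 elements.  Fix t vertices in each V_i,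
   i < s, and let U' be their common neighbourhood in W.  Averaged over all such
   choices, |U'| is at least |W| c^((s-1)t), while an l-set with fewer than
   gamma m common neighbours in some V_i lies in U' for at most a gamma^t
   fraction of the choices.  So for some choice, deleting a vertex of every such
   l-set in U' leaves at least |W| c^((s-1)t) - |W|^l gamma^t vertices.  With
   gamma = a^(K+1), a <= c^(s-1), beta K > l and t such that a^t m^beta lies in
   [4, 4/a), this exceeds m^(1-beta) as soon as m >= (4/a)^(K+1). *)

(** * Counting *)

Lemma card_bigcup_leq (T I : finType) (F : I -> {set T}) :
  (#|\bigcup_i F i| <= \sum_i #|F i|)%N.
Proof.
elim/big_rec2: _ => [|i n A _ le_A_n]; first by rewrite cards0.
by rewrite (leq_trans (leq_card_setU _ _).1) // leq_add2l.
Qed.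

Lemma exchange_sum_card (I J : finType) (A : {pred I}) (B : {pred J})
    (r : I -> J -> bool) :
  (\sum_(i in A) #|[set j in B | r i j]| =
   \sum_(j in B) #|[set i in A | r i j]|)%N.
Proof.
rewrite (eq_bigr (fun i => \sum_(j in B | r i j) 1)%N); last first.
  by move=> i _; rewrite sum1_card; apply: eq_card => j; rewrite inE.
rewrite (exchange_big_dep (fun j => j \in B)) /=; last by move=> i j _ /andP[].
apply: eq_bigr => j jB.
by rewrite sum1_card; apply: eq_card => i; rewrite unfold_in /= inE jB.
Qed.

Lemma card_ffun_on_prod (aT rT : finType) (F : aT -> {set rT}) :
  #|[set f : {ffun aT -> rT} | [forall x, f x \in F x]]| = (\prod_x #|F x|)%N.
Proof.
transitivity #|family F|.
  by apply: eq_card => f; rewrite inE; apply/forallP/familyP.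
by rewrite card_family foldrE big_map big_enum.
Qed.

Lemma bin_leq_exp n l : ('C(n, l) <= n ^ l)%N.
Proof.
rewrite (leq_trans (leq_pmulr _ (fact_gt0 l))) // bin_ffact ffact_prod.
apply: (@leq_trans (\prod_(i < l) n)); first by apply: leq_prod => i _; apply: leq_subr.
by rewrite prod_nat_const card_ord.
Qed.

Lemma exists_ge_average (R : realDomainType) (I : finType) (P : {pred I})
    (F : I -> R) (z : R) :
  (0 < #|P|)%N -> #|P|%:R * z <= \sum_(i in P) F i -> exists2 i, i \in P & z <= F i.
Proof.
move=> P_gt0 le_z_sum; apply/exists_inP; apply: contraLR le_z_sum.
rewrite negb_exists_in => /forall_inP F_lt_z.
rewrite -ltNge mulr_natl -sumr_const.
apply: ltr_sum => [|i /F_lt_z]; last by rewrite ltNge.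
by case/card_gt0P: P_gt0 => i Pi; apply/hasP; exists i; rewrite ?mem_enum.
Qed.

Lemma exists_subset_avoiding (T : finType) (U0 : {set T}) (bad : pred {set T}) :
  (forall S, bad S -> S != set0) ->
  exists U : {set T}, [/\ U \subset U0,
    (#|U0| <= #|U| + #|[set S : {set T} | S \subset U0 & bad S]|)%N &
    forall S : {set T}, S \subset U -> ~~ bad S].
Proof.
move=> bad_neq0; set B := [set S : {set T} | S \subset U0 & bad S].
(* One point of each bad set; going through option T avoids a default point. *)
pose D := [set x | Some x \in [set [pick y in S] | S : {set T} in B]].
exists (U0 :\: D); split; first exact: subsetDl.
- rewrite -(cardsID D U0) addnC leq_add2l.
  apply: leq_trans (subset_leq_card (subsetIr U0 D)) _.
  rewrite -(card_imset _ Some_inj).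
  apply: leq_trans (leq_imset_card (fun S : {set T} => [pick y in S]) B).
  by apply: subset_leq_card; apply/subsetP => _ /imsetP[x + ->]; rewrite inE.
- move=> S S_sub; apply/negP => bad_S.
  have S_B : S \in B by rewrite inE bad_S (subset_trans S_sub (subsetDl _ _)).
  have [x pick_x] : exists x, [pick y in S] = Some x.
    case: (pickP (mem S)) => [x _|S0]; first by exists x.
    by case/set0Pn: (bad_neq0 S bad_S) => y Sy; have := S0 y; rewrite /= Sy.
  have Sx : x \in S by move: pick_x; case: (pickP (mem S)) => // y Sy [<-].
  have := subsetP S_sub x Sx; rewrite !inE => /andP[/negP + _]; apply.
  by rewrite -pick_x; apply/imsetP; exists S.
Qed.

(** * Real estimates *)

Lemma exists_exp_bracket (R : archiRealFieldType) (a b p : R) :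
  0 < a -> a <= 1 / 2 -> 0 < b -> b <= p ->
  exists t, b <= a ^+ t * p /\ a ^+ t.+1 * p < b.
Proof.
move=> a_gt0 a_le_half b_gt0 b_le_p.
have p_gt0 : 0 < p by apply: lt_le_trans b_le_p.
have small : exists n, a ^+ n.+1 * p < b.
  pose n := Num.Def.archi_bound (p / b); exists n.
  have lt_n : p / b < n%:R by apply: archi_boundP; rewrite divr_ge0 ?ltW.
  have lt_pow2 : (n%:R : R) < 2 ^+ n.+1.
    by rewrite -natrX ltr_nat (ltn_trans (ltnSn n)) // ltn_expl.
  have le_pow : a ^+ n.+1 * 2 ^+ n.+1 <= 1.
    by rewrite -exprMn; apply: exprn_ile1; [rewrite mulr_ge0 // ltW | lra].
  have lt_p : p < b * 2 ^+ n.+1 by rewrite mulrC -ltr_pdivrMr // (lt_trans lt_n).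
  rewrite -(ltr_pM2r (exprn_gt0 n.+1 (ltr0Sn R 1))) mulrAC.
  by apply: le_lt_trans lt_p; rewrite ler_piMl // ltW.
case: (ex_minnP small) => t small_t min_t; exists t; split => //.
case: t small_t min_t => [_ _|t _ min_t]; first by rewrite expr0 mul1r.
by rewrite leNgt; apply/negP => /min_t; rewrite ltnn.
Qed.

Lemma sample_size_estimate (R : realFieldType) (m w a p q : R) (l K : nat) :
  m / 2 <= w <= m -> m ^+ l.+1 <= p ^+ K -> (4 / a) ^+ K.+1 <= m ->
  1 <= m -> 0 < a -> 0 < p -> 4 <= q * p -> a * (q * p) < 4 ->
  m / p <= w * q - w ^+ l * q ^+ K.+1.
Proof.
move=> /andP[w_ge w_le] le_m_pK le_am m_ge1 a_gt0 p_gt0 qp_ge4 aqp_lt4.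
have q_gt0 : 0 < q by rewrite -(pmulr_lgt0 _ p_gt0); lra.
have w_ge0 : 0 <= w by lra.
have main_term : 2 * m <= w * q * p by rewrite -mulrA; nra.
have qp_le : (q * p) ^+ K.+1 <= m.
  apply: le_trans le_am; apply: lerXn2r.
  - by rewrite nnegrE mulr_ge0 // ltW.
  - by rewrite nnegrE divr_ge0 // ltW.
  - by rewrite ler_pdivlMr // mulrC ltW.
set E := w ^+ l * q ^+ K.+1.
have error_term : E * p <= 1.
  have : E * p ^+ K.+1 <= p ^+ K.
    apply: le_trans le_m_pK; rewrite -mulrA -exprMn [m ^+ l.+1]exprSr.
    apply: ler_pM => //; rewrite ?exprn_ge0 //.
      by rewrite mulr_ge0 // ltW.
    by apply: lerXn2r; rewrite // nnegrE; lra.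
  by move=> ?; rewrite -(ler_pM2r (exprn_gt0 K p_gt0)) mul1r -mulrA -exprS.
by rewrite ler_pdivrMr // mulrBl; lra.
Qed.

Lemma exists_sample_size (R : realType) (a beta m w : R) (l K : nat) :
  0 < a -> a <= 1 / 2 -> 0 < beta -> l.+1%:R <= beta * K%:R ->
  (4 / a) ^+ K.+1 <= m -> m / 2 <= w <= m ->
  exists t, powR m (1 - beta) <= w * a ^+ t - w ^+ l * (a ^+ K.+1) ^+ t.
Proof.
move=> a_gt0 a_le_half beta_gt0 le_l_betaK le_am w_bounds.
have four_le_ratio : 4 <= 4 / a by rewrite ler_pdivlMr // ler_piMr //; lra.
have m_ge1 : 1 <= m.
  by apply: le_trans (le_am); apply: exprn_ege1; lra.
pose p := powR m beta.
have p_gt0 : 0 < p by rewrite powR_gt0 //; lra.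
have le_m_pK : m ^+ l.+1 <= p ^+ K.
  have -> : p ^+ K = powR m (beta * K%:R) by rewrite powRrM powR_mulrn // powR_ge0.
  by rewrite -powR_mulrn; [apply: ler_powR | lra].
have K_gt0 : (0 < K)%N.
  by rewrite lt0n; apply: contraTneq le_l_betaK => ->; rewrite mulr0 -ltNge ltr0Sn.
have four_le_p : 4 <= p.
  have : 4 ^+ K <= p ^+ K.
    apply: le_trans (le_m_pK); apply: le_trans (@ler_eXnr _ m l.+1 (ltn0Sn l) m_ge1).
    apply: le_trans (le_am); apply: le_trans (_ : (4 / a) ^+ K <= _).
      by apply: lerXn2r; rewrite ?nnegrE //; lra.
    by apply: ler_weXn2l; first lra.
  by rewrite ler_pXn2r // nnegrE ltW.
have [t [lo hi]] := exists_exp_bracket a_gt0 a_le_half (ltr0Sn R 3) four_le_p.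
exists t; rewrite powRB ?powRr1 -/p; last 2 first.
- lra.
- by apply/implyP => _; rewrite gt_eqF //; lra.
rewrite -exprM mulnC exprM.
apply: (sample_size_estimate w_bounds le_m_pK le_am m_ge1 a_gt0 p_gt0 lo).
by rewrite mulrA -exprS.
Qed.

Lemma pred_mul_le_half (R : realFieldType) (s : nat) (eps : R) :
  0 <= eps -> eps <= 1 / (2 * s)%:R -> s.-1%:R * eps <= 1 / 2.
Proof.
case: s => [|n] /= eps_ge0; first by rewrite mul0r; lra.
rewrite ler_pdivlMr ?ltr0n ?muln_gt0 // natrM -[n.+1]addn1 natrD.
by have : (0 : R) <= n%:R by []; nra.
Qed.

(** * Dependent random choice *)

Lemma common_nbrs_sub (T : finType) (adj : rel T) (S B : {set T}) :
  common_nbrs adj S B \subset B.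
Proof. by apply/subsetP => v; rewrite inE => /andP[]. Qed.

Section DependentRandomChoice.

Variables (R : realFieldType) (T : finType) (adj : rel T) (I : finType).
Variables (A : I -> {set T}) (W : {set T}) (m t l : nat) (c g : R).
Hypothesis card_A : forall i, #|A i| = m.
Hypothesis W_deg :
  forall v, v \in W -> forall i, c * m%:R <= #|common_nbrs adj [set v] (A i)|%:R.

Let tuples := [set f : {ffun I * 'I_t -> T} | [forall x, f x \in A x.1]].
Let joint_nbrs (f : {ffun I * 'I_t -> T}) := [set v in W | [forall x, adj v (f x)]].
Let bad (S : {set T}) :=
  (#|S| == l) && [exists i, #|common_nbrs adj S (A i)|%:R < g * m%:R].

Lemma card_tuples_joint_nbrs (S : {set T}) : S \subset W ->
  #|[set f in tuples | S \subset joint_nbrs f]| =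
  (\prod_(x : I * 'I_t) #|common_nbrs adj S (A x.1)|)%N.
Proof.
move=> SW; rewrite -card_ffun_on_prod; apply: eq_card => f; rewrite !inE.
apply/andP/forallP => [[/forallP fA /subsetP S_nbrs] x | f_nbrs].
  rewrite inE fA; apply/forall_inP => u /S_nbrs.
  by rewrite inE => /andP[_ /forallP]; apply.
split; first by apply/forallP => x; have := f_nbrs x; rewrite inE => /andP[].
apply/subsetP => u Su; rewrite inE (subsetP SW) //; apply/forallP => x.
by have := f_nbrs x; rewrite inE => /andP[_ /forall_inP]; apply.
Qed.

Lemma sum_card_subsets_joint_nbrs (Q : pred {set T}) :
  (\sum_(f in tuples) #|[set S : {set T} | S \subset joint_nbrs f & Q S]| =
   \sum_(S in [set S : {set T} | S \subset W & Q S])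
     \prod_(x : I * 'I_t) #|common_nbrs adj S (A x.1)|)%N.
Proof.
set B := [set S : {set T} | S \subset W & Q S].
rewrite (eq_bigr (fun f => #|[set S in B | S \subset joint_nbrs f]|)).
  rewrite exchange_sum_card; apply: eq_bigr => S; rewrite inE => /andP[SW _].
  exact: card_tuples_joint_nbrs.
move=> f _; apply: eq_card => S; rewrite !inE.
case S_sub: (S \subset joint_nbrs f); rewrite ?andbF //= andbT.
by rewrite (subset_trans S_sub) //; apply/subsetP => v; rewrite inE => /andP[].
Qed.

Lemma card_tuples : #|tuples| = (m ^ (#|I| * t))%N.
Proof.
rewrite card_ffun_on_prod (eq_bigr (fun _ => m)) => [|x _]; last exact: card_A.
by rewrite prod_nat_const card_prod card_ord.
Qed.

Lemma sum_card_joint_nbrs_ge :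
  0 <= c ->
  #|W|%:R * (c * m%:R) ^+ (#|I| * t) <= \sum_(f in tuples) (#|joint_nbrs f|%:R : R).
Proof.
move=> c_ge0.
have card_singletons (B : {set T}) :
    #|B| = #|[set S : {set T} | S \subset B & #|S| == 1%N]|.
  by rewrite cards_draws bin1.
rewrite -natr_sum (eq_bigr _ (fun f _ => card_singletons (joint_nbrs f))).
rewrite sum_card_subsets_joint_nbrs natr_sum card_singletons mulr_natl -sumr_const.
apply: ler_sum => S /[!inE] /andP[W_S /cards1P[v def_S]].
have Wv : v \in W by rewrite -sub1set -def_S.
have -> : (c * m%:R) ^+ (#|I| * t) = \prod_(x : I * 'I_t) (c * m%:R).
  by rewrite prodr_const card_prod card_ord.
by rewrite def_S natr_prod; apply: ler_prod => x _; rewrite mulr_ge0 // W_deg.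
Qed.

Lemma prod_card_common_nbrs_le (S : {set T}) (i0 : I) :
  0 <= g -> #|common_nbrs adj S (A i0)|%:R < g * m%:R ->
  \prod_(x : I * 'I_t) (#|common_nbrs adj S (A x.1)|%:R : R) <=
  g ^+ t * m%:R ^+ (#|I| * t).
Proof.
move=> g_ge0 sparse_i0.
apply: le_trans (_ : \prod_(x : I * 'I_t) ((if x.1 == i0 then g else 1) * m%:R) <= _).
  apply: ler_prod => x _; rewrite ler0n /=.
  case: eqP => [-> | _]; first exact: ltW.
  by rewrite mul1r ler_nat -(card_A x.1) subset_leq_card // common_nbrs_sub.
rewrite big_split /= prodr_const card_prod card_ord.
rewrite -(pair_bigA _ (fun i (j : 'I_t) => if i == i0 then g else 1)) /=.
rewrite (eq_bigr (fun i => if i == i0 then g ^+ t else 1)) => [|i _]; last first.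
  by case: eqP => _; rewrite prodr_const card_ord ?expr1n.
by rewrite -big_mkcond big_pred1_eq.
Qed.

Lemma sum_card_bad_le :
  0 <= g ->
  \sum_(f in tuples) (#|[set S : {set T} | S \subset joint_nbrs f & bad S]|%:R : R) <=
  (#|W| ^ l)%:R * (g ^+ t * m%:R ^+ (#|I| * t)).
Proof.
move=> g_ge0; rewrite -natr_sum sum_card_subsets_joint_nbrs natr_sum.
set B := [set S : {set T} | S \subset W & bad S].
apply: le_trans (_ : \sum_(S in B) g ^+ t * m%:R ^+ (#|I| * t) <= _).
  apply: ler_sum => S /[!inE] /andP[_ /andP[_ /existsP[i0 sparse]]].
  by rewrite natr_prod; apply: prod_card_common_nbrs_le sparse.
rewrite sumr_const -(mulr_natl (g ^+ t * _)).
apply: ler_wpM2r; first by rewrite mulr_ge0 ?exprn_ge0.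
rewrite ler_nat (leq_trans _ (bin_leq_exp _ l)) // -cards_draws subset_leq_card //.
by apply/subsetP => S /[!inE] /andP[-> /andP[-> _]].
Qed.

Lemma exists_tuple_few_bad :
  (0 < m)%N -> 0 <= c -> 0 <= g ->
  exists2 f, f \in tuples &
    #|W|%:R * c ^+ (#|I| * t) - (#|W| ^ l)%:R * g ^+ t <=
    #|joint_nbrs f|%:R - #|[set S : {set T} | S \subset joint_nbrs f & bad S]|%:R.
Proof.
move=> m_gt0 c_ge0 g_ge0.
have tuples_gt0 : (0 < #|tuples|)%N by rewrite card_tuples expn_gt0 m_gt0.
apply: exists_ge_average tuples_gt0 _.
rewrite sumrB card_tuples natrX mulrBr.
apply: lerB; first by rewrite mulrCA -exprMn [m%:R * c]mulrC sum_card_joint_nbrs_ge.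
by rewrite mulrCA [_ * g ^+ t]mulrC sum_card_bad_le.
Qed.

Lemma dependent_random_choice :
  (0 < m)%N -> 0 <= c -> 0 <= g <= 1 ->
  exists U : {set T},
    [/\ U \subset W,
        #|W|%:R * c ^+ (#|I| * t) - (#|W| ^ l)%:R * g ^+ t <= #|U|%:R &
        forall S : {set T}, S \subset U -> #|S| = l ->
          forall i, g * m%:R <= #|common_nbrs adj S (A i)|%:R].
Proof.
move=> m_gt0 c_ge0 /andP[g_ge0 g_le1].
have [f _ le_f] := exists_tuple_few_bad m_gt0 c_ge0 g_ge0.
have bad_neq0 S : bad S -> S != set0.
  case/andP => _ /existsP[i]; apply: contraTneq => ->.
  have -> : common_nbrs adj set0 (A i) = A i.
    apply/setP => v; rewrite inE andb_idr // => _.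
    by apply/forall_inP => u; rewrite inE.
  by rewrite -leNgt card_A ler_piMl.
have [U [U_sub le_U U_good]] := exists_subset_avoiding (joint_nbrs f) bad_neq0.
exists U; split.
- by apply: subset_trans U_sub _; apply/subsetP => v; rewrite inE => /andP[].
- by apply: le_trans le_f _; rewrite lerBlDr -natrD ler_nat.
- move=> S S_sub card_S i; rewrite leNgt; apply: contraNN (U_good S S_sub) => sparse.
  by rewrite /bad card_S eqxx; apply/existsP; exists i.
Qed.

End DependentRandomChoice.

(** * Regular pairs *)

Section Regularity.

Variables (T : finType) (adj : rel T).
Hypothesis adj_sym : symmetric adj.

Lemma common_nbrs1 (u : T) (B : {set T}) :
  common_nbrs adj [set u] B = [set v in B | adj u v].
Proof.
apply/setP => v; rewrite !inE; congr (_ && _).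
by apply/forall_inP/idP => [/(_ u (set11 u)) | adj_uv w /set1P ->].
Qed.

Lemma edges_between_sum (A B : {set T}) :
  edges_between adj A B = (\sum_(b in B) #|common_nbrs adj [set b] A|)%N.
Proof.
rewrite /edges_between -sum1_card.
rewrite (eq_bigl (fun p => (p.1 \in A) && ((p.2 \in B) && adj p.1 p.2))); last first.
  by move=> [a b]; rewrite !inE andbA.
rewrite -(pair_big_dep (mem A) (fun a b => (b \in B) && adj a b) (fun _ _ => 1%N)) /=.
rewrite (exchange_big_dep (mem B)) /=; last by move=> a b _ /andP[].
apply: eq_bigr => b Bb; rewrite sum1_card common_nbrs1; apply: eq_card => a.
by rewrite unfold_in /= !inE Bb adj_sym.
Qed.

Variables (R : realType) (eps delta c : R).
Hypotheses (eps_ge0 : 0 <= eps) (le_c : c <= delta - eps).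

Lemma card_low_degree_le (A B : {set T}) :
  eps_regular adj eps A B -> delta <= density R adj A B -> (0 < #|A|)%N ->
  #|[set v in B | #|common_nbrs adj [set v] A|%:R < c * #|A|%:R]|%:R <= eps * #|B|%:R.
Proof.
move=> [_ regAB] dense A_gt0; set L := [set v in B | _].
have LB : L \subset B by apply/subsetP => v /[!inE] /andP[].
have [eps_ge1 | eps_lt1] := leP 1 eps.
  by apply: le_trans (ler_peMl _ eps_ge1); rewrite ?ler_nat ?subset_leq_card.
rewrite leNgt; apply/negP => large_L.
have L_gt0 : (0 < #|L|)%N by rewrite -(ltr0n R) (le_lt_trans _ large_L) // mulr_ge0.
have sparse_AL : density R adj A L < c.
  rewrite /density edges_between_sum natr_sum ltr_pdivrMr ?ltr0n ?muln_gt0 ?A_gt0 //.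
  rewrite natrM mulrA mulr_natr -sumr_const; apply: ltr_sum.
    by case/card_gt0P: L_gt0 => x Lx; apply/hasP; exists x; rewrite ?mem_enum.
  by move=> v /[!inE] /andP[].
have large_A : eps * #|A|%:R < #|A|%:R by rewrite gtr_pMl // ltr0n.
have := regAB A L (subxx A) LB large_A large_L; rewrite ltNge => /negP; apply.
rewrite distrC; apply: le_trans (ler_norm _).
by move: (lt_le_trans sparse_AL le_c); lra.
Qed.

Lemma card_high_degree_ge (I : finType) (A : I -> {set T}) (B : {set T}) (m : nat) :
  (0 < m)%N -> (forall i, #|A i| = m) ->
  (forall i, eps_regular adj eps (A i) B /\ delta <= density R adj (A i) B) ->
  #|B|%:R - #|I|%:R * (eps * #|B|%:R) <=
  #|[set v in B | [forall i, c * m%:R <= #|common_nbrs adj [set v] (A i)|%:R]]|%:R.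
Proof.
move=> m_gt0 card_A reg_A; set W := [set v in B | _].
pose L i := [set v in B | #|common_nbrs adj [set v] (A i)|%:R < c * m%:R].
have B_sub : B \subset W :|: \bigcup_i L i.
  apply/subsetP => v Bv; rewrite inE; case: (boolP (v \in W)) => //= W'v.
  move: W'v; rewrite inE Bv /= negb_forall => /existsP[i low_i].
  by apply/bigcupP; exists i => //; rewrite inE Bv ltNge.
have card_L i : #|L i|%:R <= eps * #|B|%:R.
  have [reg dense] := reg_A i.
  by rewrite /L -(card_A i) card_low_degree_le ?card_A.
rewrite lerBlDr; apply: le_trans (_ : (#|W| + \sum_i #|L i|)%:R <= _).
  rewrite ler_nat (leq_trans (subset_leq_card B_sub)) //.
  by rewrite (leq_trans (leq_card_setU _ _).1) // leq_add2l card_bigcup_leq.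
rewrite natrD lerD2l natr_sum mulr_natl -sumr_const.
by apply: ler_sum => i _; apply: card_L.
Qed.

Lemma exists_high_degree_set (I : finType) (A : I -> {set T}) (B : {set T}) (m : nat) :
  (0 < m)%N -> (forall i, #|A i| = m) -> #|B| = m -> #|I|%:R * eps <= 1 / 2 ->
  (forall i, eps_regular adj eps (A i) B /\ delta <= density R adj (A i) B) ->
  exists W : {set T}, [/\ W \subset B, (m%:R / 2 : R) <= #|W|%:R <= (m%:R : R) &
    forall v, v \in W -> forall i, c * m%:R <= #|common_nbrs adj [set v] (A i)|%:R].
Proof.
move=> m_gt0 card_A card_B small_I reg_A.
have := card_high_degree_ge m_gt0 card_A reg_A; set W := [set v in B | _] => W_large.
have W_sub : W \subset B by apply/subsetP => v /[!inE] /andP[].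
exists W; split => //; last by move=> v /[!inE] /andP[_ /forallP].
rewrite -card_B ler_nat subset_leq_card // andbT; apply: le_trans W_large.
have m_ge0 : (0 : R) <= m%:R by [].
by rewrite card_B mulrA; nra.
Qed.

Lemma exists_large_set_common_nbrs (I : finType) (A : I -> {set T}) (B : {set T})
    (m l K : nat) (a beta : R) :
  (forall i, #|A i| = m) -> #|B| = m -> #|I|%:R * eps <= 1 / 2 ->
  (forall i, eps_regular adj eps (A i) B /\ delta <= density R adj (A i) B) ->
  0 < c -> 0 < a -> a <= 1 / 2 -> a <= c ^+ #|I| ->
  0 < beta -> l.+1%:R <= beta * K%:R -> (4 / a) ^+ K.+1 <= m%:R ->
  exists U : {set T},
    [/\ U \subset B, powR m%:R (1 - beta) <= #|U|%:R &
        forall S : {set T}, S \subset U -> #|S| = l ->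
          forall i, a ^+ K.+1 * m%:R <= #|common_nbrs adj S (A i)|%:R].
Proof.
move=> card_A card_B small_I reg_A c_gt0 a_gt0 a_le_half a_le_c beta_gt0 le_l_betaK.
move=> le_am.
have m_gt0 : (0 < m)%N.
  by rewrite -(ltr0n R) (lt_le_trans _ le_am) // exprn_gt0 // divr_gt0.
have [W [W_sub W_bounds W_deg]] :=
  exists_high_degree_set m_gt0 card_A card_B small_I reg_A.
have [t le_t] := exists_sample_size a_gt0 a_le_half beta_gt0 le_l_betaK le_am W_bounds.
have gamma_bounds : 0 <= a ^+ K.+1 <= 1 by rewrite exprn_ge0 ?exprn_ile1 ?ltW //; lra.
have [U [U_sub U_large U_nbrs]] :=
  dependent_random_choice t l card_A W_deg m_gt0 (ltW c_gt0) gamma_bounds.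
exists U; split => //; first exact: subset_trans U_sub W_sub.
apply: le_trans le_t (le_trans _ U_large).
rewrite natrX lerD2r; apply: ler_wpM2l => //.
by rewrite exprM; apply: lerXn2r => //; rewrite nnegrE ?exprn_ge0 // ltW.
Qed.

Lemma regular_star_common_nbrs (V : nat -> {set T}) (s m l K : nat) (a beta : R) :
  (0 < s)%N -> eps <= 1 / (2 * s)%:R ->
  (forall i, (1 <= i <= s)%N -> #|V i| = m) ->
  (forall i, (1 <= i < s)%N ->
     eps_regular adj eps (V i) (V s) /\ delta <= density R adj (V i) (V s)) ->
  0 < c -> 0 < a -> a <= 1 / 2 -> a <= c ^+ s.-1 ->
  0 < beta -> l.+1%:R <= beta * K%:R -> (4 / a) ^+ K.+1 <= m%:R ->
  exists U : {set T},
    [/\ U \subset V s, powR m%:R (1 - beta) <= #|U|%:R &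
        forall S : {set T}, S \subset U -> #|S| = l ->
          forall i, (1 <= i < s)%N ->
            a ^+ K.+1 * m%:R <= #|common_nbrs adj S (V i)|%:R].
Proof.
move=> s_gt0 eps_s card_V V_reg c_gt0 a_gt0 a_le_half a_le_c beta_gt0 le_l_betaK le_am.
have card_A (i : 'I_s.-1) : #|V i.+1| = m.
  by rewrite card_V //= (leq_trans (ltn_ord i)) // leq_pred.
have card_B : #|V s| = m by rewrite card_V // s_gt0 leqnn.
have small_I : #|'I_s.-1|%:R * eps <= 1 / 2 by rewrite card_ord pred_mul_le_half.
have reg_A (i : 'I_s.-1) :
    eps_regular adj eps (V i.+1) (V s) /\ delta <= density R adj (V i.+1) (V s).
  by apply: V_reg; rewrite /= -ltn_predRL.
rewrite -(card_ord s.-1) in a_le_c.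
have [U [U_sub U_large U_nbrs]] := exists_large_set_common_nbrs card_A card_B small_I
  reg_A c_gt0 a_gt0 a_le_half a_le_c beta_gt0 le_l_betaK le_am.
exists U; split=> // S S_sub card_S i /andP[i_gt0 i_lt_s].
have i_lt_pred : (i.-1 < s.-1)%N by rewrite ltn_predRL prednK.
by have := U_nbrs S S_sub card_S (Ordinal i_lt_pred); rewrite /= prednK.
Qed.

End Regularity.

Theorem lemma2p5 (R : realType) (s : nat) (delta : R) (hdelta : 0 < delta) :
  forall (beta : R), 0 < beta -> forall l : nat,
  exists2 gamma : R, 0 < gamma &
  forall eps : R, 0 < eps -> eps <= 1 / (2 * s)%:R -> eps <= delta / 2 ->
  exists M : nat, forall m : nat, (M <= m)%N ->
  forall (T : finType) (adj : rel T) (V : nat -> {set T}),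
    simple_graph adj ->
    (forall i j, (1 <= i <= s)%N -> (1 <= j <= s)%N -> i != j ->
       [disjoint V i & V j]) ->
    (forall i, (1 <= i <= s)%N -> #|V i| = m) ->
    (forall i, (1 <= i < s)%N ->
       eps_regular adj eps (V i) (V s) /\ delta <= density R adj (V i) (V s)) ->
    exists U : {set T},
      [/\ U \subset V s,
          powR (m%:R : R) (1 - beta) <= #|U|%:R &
          forall S : {set T}, S \subset U -> #|S| = l ->
            forall i, (1 <= i < s)%N ->
              gamma * m%:R <= #|common_nbrs adj S (V i)|%:R].
Proof.
move=> beta beta_gt0 l.
(* With exponent s.+1 (not s.-1), a <= c <= 1/2 for every s, and still a <= c^(s-1). *)
set c := Num.min delta 1 / 2; set a := c ^+ s.+1.
have c_gt0 : 0 < c by rewrite divr_gt0 // lt_min hdelta ltr01.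
have c_le_half : c <= 1 / 2 by rewrite ler_pM2r ?invr_gt0 ?ltr0n // ge_min lexx orbT.
have a_gt0 : 0 < a by rewrite exprn_gt0.
have a_le_half : a <= 1 / 2.
  by apply: le_trans (c_le_half); apply: ler_iXnr => //; [exact: ltW | lra].
have a_le_c : a <= c ^+ s.-1.
  by apply: ler_wiXn2l; [exact: ltW | lra | exact: leq_trans (leq_pred s) _].
have [K le_l_betaK] : exists K, l.+1%:R <= beta * K%:R.
  exists (Num.Def.archi_bound (l.+1%:R / beta)).
  by rewrite mulrC -ler_pdivrMr // ltW // archi_boundP // divr_ge0 // ltW.
exists (a ^+ K.+1) => [|eps eps_gt0 eps_s eps_delta]; first by rewrite exprn_gt0.
have s_gt0 : (0 < s)%N.
  by case: (posnP s) eps_s => // ->; rewrite muln0 invr0 mulr0; lra.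
have le_c : c <= delta - eps.
  have : c <= delta / 2 by rewrite ler_pM2r ?invr_gt0 ?ltr0n // ge_min lexx.
  lra.
exists (Num.Def.archi_bound ((4 / a) ^+ K.+1)).
move=> m m_large T adj V [adj_sym _] _ card_V V_reg.
apply: (regular_star_common_nbrs adj_sym (ltW eps_gt0) le_c s_gt0 eps_s card_V V_reg
  c_gt0 a_gt0 a_le_half a_le_c beta_gt0 le_l_betaK).
apply: le_trans (ltW (archi_boundP _)) _; rewrite ?ler_nat //.
by rewrite exprn_ge0 // divr_ge0 // ltW.
Qed.
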